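(* Let $0<\beta<\zeta$ (so that $\xi_2(\beta)<\xi_1(\beta)$). For $C\in(\xi_2(\beta),\xi_1(\beta))$ let $z_f^C\in(0,d)$ be the unique point such that $F_{z_f^C}\mathbf 1_{[0,z_f^C]}+G_{C,z_f^C}\mathbf 1_{(z_f^C,d]}$ solves Problem 1 with derivative $0$ at $0$ and value $C$ at $d$, and let $z_g^C\in(d,\infty)$ be the unique point such that $H_{C,z_g^C}\mathbf 1_{[d,z_g^C]}+K_{z_g^C}\mathbf 1_{(z_g^C,\infty)}$ is bounded and solves Problem 2 with value $C$ at $d$. (i) The map $(\xi_2(\beta),\xi_1(\beta))\to\mathbb R$, $C\mapsto G_{C,z_f^C}'(d)$ is strictly increasing, and $G_{\xi_1(\beta),d}'(d)=-\beta$. (ii) The map $(\xi_2(\beta),\xi_1(\beta))\to\mathbb R$, $C\mapsto H_{C,z_g^C}'(d)$ is strictly decreasing, and $H_{\xi_2(\beta),d}'(d)=-\beta$.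
   Context: Fix $\mu\in\mathbb R$, $\sigma>0$, $u_0>0$, $r>0$, $\beta>0$, $d>0$. For $u\in[0,u_0]$ let $\theta_1(u)=\frac{\sqrt{(\mu-u)^2+2r\sigma^2}+(\mu-u)}{\sigma^2}$, $\theta_2(u)=\frac{\sqrt{(\mu-u)^2+2r\sigma^2}-(\mu-u)}{\sigma^2}$; write $\alpha_i=\theta_i(u_0)$, $\gamma_i=\theta_i(0)$. Define $\zeta=\frac{\alpha_1\alpha_2(e^{\alpha_1d}-e^{-\alpha_2d})}{r(\alpha_1+\alpha_2)e^{\alpha_1d}}$, $\xi_1(\beta)=\frac{\beta u_0}{r}-\beta\frac{e^{\alpha_1d}+\frac{\alpha_1}{\alpha_2}e^{-\alpha_2d}}{\alpha_1(e^{\alpha_1d}-e^{-\alpha_2d})}$, $\xi_2(\beta)=\frac{\beta u_0-1}{r}+\frac{\beta}{\alpha_2}$. For $s\in(0,d]$, $t\ge d$, real $C$: $F_s(z)=\frac{\beta u_0}{r}-\beta\frac{e^{\alpha_1z}+\frac{\alpha_1}{\alpha_2}e^{-\alpha_2z}}{\alpha_1(e^{\alpha_1s}-e^{-\alpha_2s})}$; $G_{C,s}(z)=\frac{C\gamma_2e^{-\gamma_2(s-d)}-\beta}{\gamma_1e^{\gamma_1s}+\gamma_2e^{(\gamma_1+\gamma_2)d}e^{-\gamma_2s}}(e^{\gamma_1z}-e^{(\gamma_1+\gamma_2)d}e^{-\gamma_2z})+Ce^{-\gamma_2(z-d)}$; $H_{C,t}(z)=-\frac1r+\frac{C+\frac1r-\frac{\beta}{\gamma_2}e^{-\gamma_2(d-t)}}{e^{\gamma_1d}+\frac{\gamma_1}{\gamma_2}e^{(\gamma_1+\gamma_2)t}e^{-\gamma_2d}}(e^{\gamma_1z}+\frac{\gamma_1}{\gamma_2}e^{(\gamma_1+\gamma_2)t}e^{-\gamma_2z})+\frac{\beta}{\gamma_2}e^{-\gamma_2(z-t)}$;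 $K_t(z)=\frac{\beta u_0-1}{r}+\frac{\beta}{\alpha_2}e^{-\alpha_2(z-t)}$. Problem 1: a bounded $C^2$ function $f$ on $[0,d]$ with $-rf-\mu f'+\frac{\sigma^2}{2}f''+\sup_{u\in[0,u_0]}\{(\beta+f')u\}=0$ on $[0,d]$. Problem 2: a bounded $C^2$ function $g$ on $[d,\infty)$ with $-rg-\mu g'+\frac{\sigma^2}{2}g''+\sup_{u\in[0,u_0]}\{(\beta+g')u\}=1$ on $[d,\infty)$. (The existence and uniqueness of $z_f^C,z_g^C$ for $C$ in the stated interval is established in the paper.) *)

From Stdlib Require Import Reals.
From Coquelicot Require Import Coquelicot.
Open Scope R_scope.

Definition theta1 (mu sigma r u : R) : R :=
  (sqrt ((mu - u)^2 + 2 * r * sigma^2) + (mu - u)) / sigma^2.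
Definition theta2 (mu sigma r u : R) : R :=
  (sqrt ((mu - u)^2 + 2 * r * sigma^2) - (mu - u)) / sigma^2.

Definition alpha1 mu sigma u0 r := theta1 mu sigma r u0.
Definition alpha2 mu sigma u0 r := theta2 mu sigma r u0.
Definition gamma1 mu sigma r := theta1 mu sigma r 0.
Definition gamma2 mu sigma r := theta2 mu sigma r 0.

Definition zeta (mu sigma u0 r d : R) : R :=
  let a1 := alpha1 mu sigma u0 r in let a2 := alpha2 mu sigma u0 r in
  a1 * a2 * (exp (a1 * d) - exp (- a2 * d)) / (r * (a1 + a2) * exp (a1 * d)).

Definition xi1 (mu sigma u0 r d beta : R) : R :=
  let a1 := alpha1 mu sigma u0 r in let a2 := alpha2 mu sigma u0 r in
  beta * u0 / r
  - beta * (exp (a1 * d) + a1 / a2 * exp (- a2 * d)) / (a1 * (exp (a1 * d) - exp (- a2 * d))).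

Definition xi2 (mu sigma u0 r beta : R) : R :=
  (beta * u0 - 1) / r + beta / alpha2 mu sigma u0 r.

Definition Ffun (mu sigma u0 r beta s z : R) : R :=
  let a1 := alpha1 mu sigma u0 r in let a2 := alpha2 mu sigma u0 r in
  beta * u0 / r
  - beta * (exp (a1 * z) + a1 / a2 * exp (- a2 * z)) / (a1 * (exp (a1 * s) - exp (- a2 * s))).

Definition Gfun (mu sigma r d beta C s z : R) : R :=
  let g1 := gamma1 mu sigma r in let g2 := gamma2 mu sigma r in
  (C * g2 * exp (- g2 * (s - d)) - beta)
    / (g1 * exp (g1 * s) + g2 * exp ((g1 + g2) * d) * exp (- g2 * s))
    * (exp (g1 * z) - exp ((g1 + g2) * d) * exp (- g2 * z))
  + C * exp (- g2 * (z - d)).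

Definition Hfun (mu sigma r d beta C t z : R) : R :=
  let g1 := gamma1 mu sigma r in let g2 := gamma2 mu sigma r in
  - (1 / r)
  + (C + 1 / r - beta / g2 * exp (- g2 * (d - t)))
    / (exp (g1 * d) + g1 / g2 * exp ((g1 + g2) * t) * exp (- g2 * d))
    * (exp (g1 * z) + g1 / g2 * exp ((g1 + g2) * t) * exp (- g2 * z))
  + beta / g2 * exp (- g2 * (z - t)).

Definition Kfun (mu sigma u0 r beta t z : R) : R :=
  (beta * u0 - 1) / r + beta / alpha2 mu sigma u0 r * exp (- alpha2 mu sigma u0 r * (z - t)).

Definition Hsup (u0 beta p : R) : R :=
  real (Lub_Rbar (fun y => exists u, 0 <= u <= u0 /\ y = (beta + p) * u)).

Definition hjb (mu sigma u0 r beta rhs : R) (h : R -> R) (x : R) : Prop :=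
  ex_derive h x /\ ex_derive (Derive h) x /\ continuous (Derive_n h 2) x /\
  - r * h x - mu * Derive h x + sigma^2 / 2 * Derive_n h 2 x
    + Hsup u0 beta (Derive h x) = rhs.

Definition solves_P1 (mu sigma u0 r beta d : R) (h : R -> R) : Prop :=
  (exists M, forall x, 0 <= x <= d -> Rabs (h x) <= M) /\
  (forall x, 0 <= x <= d -> hjb mu sigma u0 r beta 0 h x).

Definition solves_P2 (mu sigma u0 r beta d : R) (h : R -> R) : Prop :=
  (exists M, forall x, d <= x -> Rabs (h x) <= M) /\
  (forall x, d <= x -> hjb mu sigma u0 r beta 1 h x).

Definition glue (f1 f2 : R -> R) (z : R) (x : R) : R :=
  if Rle_dec x z then f1 x else f2 x.

Definition candP1 (mu sigma u0 r d beta C z : R) : R -> R :=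
  glue (Ffun mu sigma u0 r beta z) (Gfun mu sigma r d beta C z) z.

Definition candP2 (mu sigma u0 r d beta C z : R) : R -> R :=
  glue (Hfun mu sigma r d beta C z) (Kfun mu sigma u0 r beta z) z.

Definition zf_prop (mu sigma u0 r d beta C z : R) : Prop :=
  0 < z < d /\
  solves_P1 mu sigma u0 r beta d (candP1 mu sigma u0 r d beta C z) /\
  Derive (candP1 mu sigma u0 r d beta C z) 0 = 0 /\
  candP1 mu sigma u0 r d beta C z d = C.

Definition zg_prop (mu sigma u0 r d beta C z : R) : Prop :=
  d < z /\
  solves_P2 mu sigma u0 r beta d (candP2 mu sigma u0 r d beta C z) /\
  candP2 mu sigma u0 r d beta C z d = C.

From Stdlib Require Import Reals Lra Psatz.
From Coquelicot Require Import Coquelicot.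
Open Scope R_scope.

(* [G_{C,s}] solves the homogeneous equation with slope [-beta] at [s], so it is the combination
   [hom_sol] of [exp (g1 x)] and [exp (-g2 x)] with value [G_{C,s}(s)] and slope [-beta] at [s];
   continuity of the candidate at the free boundary forces [G_{C,s}(s) = F_s(s)].  Hence [C = G(d)]
   and [G'(d)] are explicit functions of [s = z_f^C], and both increase strictly with [s]: their
   [s]-derivatives are positive because [d/ds F_s(s) > -beta] and [r F_s(s) < mu beta].  So
   [z_f^C] and then [G'(d)] increase with [C].  Likewise [H_{C,t} + 1/r] is [hom_sol] with value
   [K_t(t) + 1/r = beta u0/r + beta/alpha2] at [t], which does not depend on [t]; since
   [r (beta u0/r + beta/alpha2) > mu beta], [C] increases and [H'(d)] decreases with [t = z_g^C].
   At [s = d] (resp. [t = d]) the slope at [d] is the built-in [-beta]. *)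

Ltac positivity :=
  repeat first [ assumption | apply exp_pos | apply Rplus_lt_0_compat
               | apply Rmult_lt_0_compat | apply Rinv_0_lt_compat ].

(* [auto_derive] leaves equalities stated in [R_AbsRing], which [field] does not recognise. *)
Ltac derive_field :=
  match goal with |- ?a = ?b => change (@eq R a b) end; unfold Rminus; field.

Lemma glue_eq_of_continuous (f1 f2 : R -> R) z :
  continuous (glue f1 f2 z) z -> continuous f2 z -> f1 z = f2 z.
Proof.
  intros Hglue Hf2.
  assert (glue_z : glue f1 f2 z z = f1 z) by (unfold glue; destruct (Rle_dec z z); lra).
  unfold continuous in Hglue; rewrite glue_z in Hglue.
  apply (filterlim_filter_le_1 (G := at_right z) _ (filter_le_within (F := locally z) _))
    in Hglue, Hf2.
  apply (filterlim_locally_unique (F := at_right z) f2); [|exact Hf2].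
  apply (filterlim_ext_loc (glue f1 f2 z)); [|exact Hglue].
  exists (mkposreal 1 Rlt_0_1); intros x _ hx.
  unfold glue; destruct (Rle_dec x z); [lra | reflexivity].
Qed.

Lemma strict_mono_transfer (I : R -> Prop) (T P : R -> R) x y :
  (forall x y, I x -> I y -> x < y -> T x < T y /\ P x < P y) ->
  I x -> I y -> T x < T y -> P x < P y.
Proof.
  intros mono Ix Iy hT.
  destruct (Rtotal_order x y) as [lt | [-> | gt]].
  - apply (mono _ _ Ix Iy lt).
  - lra.
  - destruct (mono _ _ Iy Ix gt); lra.
Qed.

Lemma weighted_sum_pos A B E1 E2 :
  0 < A -> 0 < A + B -> 1 <= E1 -> 0 <= E2 <= 1 -> 0 < A * E1 + B * E2.
Proof. intros; destruct (Rle_lt_dec 0 B); nra. Qed.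

Lemma exp_ge_1 x : 0 <= x -> 1 <= exp x.
Proof. pose proof (exp_ineq1_le x); lra. Qed.

Lemma exp_le_1 x : x <= 0 -> exp x <= 1.
Proof.
  intros [neg | ->]; [|rewrite exp_0; lra].
  rewrite <- exp_0; left; apply exp_increasing, neg.
Qed.

Lemma exp_neg_mul a x : exp (- a * x) = / exp (a * x).
Proof. rewrite <- exp_Ropp; f_equal; ring. Qed.

Lemma exp_mul_sub a x y : exp (a * (x - y)) = exp (a * x) / exp (a * y).
Proof. unfold Rdiv; rewrite <- exp_Ropp, <- exp_plus; f_equal; ring. Qed.

Lemma exp_add_mul a b x : exp ((a + b) * x) = exp (a * x) * exp (b * x).
Proof. rewrite <- exp_plus; f_equal; ring. Qed.

Section Theta.
Variables mu sigma r u : R.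
Hypotheses (sigma_pos : 0 < sigma) (r_pos : 0 < r).

Let disc_pos : 0 < r * sigma^2.
Proof. apply Rmult_lt_0_compat; [lra | apply pow_lt; lra]. Qed.

Let abs_lt_sqrt_disc : Rabs (mu - u) < sqrt ((mu - u)^2 + 2 * r * sigma^2).
Proof.
  rewrite <- sqrt_Rsqr_abs; apply sqrt_lt_1_alt; split; [apply Rle_0_sqr|].
  unfold Rsqr; lra.
Qed.

Lemma theta1_pos : 0 < theta1 mu sigma r u.
Proof.
  unfold theta1; apply Rdiv_lt_0_compat; [|apply pow_lt; lra].
  pose proof (Rle_abs (- (mu - u))); rewrite Rabs_Ropp in *; lra.
Qed.

Lemma theta2_pos : 0 < theta2 mu sigma r u.
Proof.
  unfold theta2; apply Rdiv_lt_0_compat; [|apply pow_lt; lra].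
  pose proof (Rle_abs (mu - u)); lra.
Qed.

Lemma theta1_mul_theta2 : theta1 mu sigma r u * theta2 mu sigma r u = 2 * r / sigma^2.
Proof.
  unfold theta1, theta2.
  assert (0 <= (mu - u)^2 + 2 * r * sigma^2) by (pose proof (pow2_ge_0 (mu - u)); lra).
  replace ((sqrt ((mu - u)^2 + 2 * r * sigma^2) + (mu - u)) / sigma^2
           * ((sqrt ((mu - u)^2 + 2 * r * sigma^2) - (mu - u)) / sigma^2))
    with ((Rsqr (sqrt ((mu - u)^2 + 2 * r * sigma^2)) - (mu - u)^2) / (sigma^2 * sigma^2))
    by (unfold Rsqr; field; lra).
  rewrite Rsqr_sqrt by assumption. field; lra.
Qed.

Lemma theta1_sub_theta2 : theta1 mu sigma r u - theta2 mu sigma r u = 2 * (mu - u) / sigma^2.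
Proof. unfold theta1, theta2; field; lra. Qed.

End Theta.

Section HomogeneousSolution.
Variables g1 g2 beta : R.
Hypotheses (g1_pos : 0 < g1) (g2_pos : 0 < g2).

(* The combination of [exp (g1 x)] and [exp (- g2 x)] with value [v] and slope [- beta] at [0]. *)
Definition hom_sol (v x : R) : R :=
  ((g2 * v - beta) * exp (g1 * x) + (g1 * v + beta) * exp (- g2 * x)) / (g1 + g2).

Definition hom_sol_slope (v x : R) : R :=
  (g1 * (g2 * v - beta) * exp (g1 * x) - g2 * (g1 * v + beta) * exp (- g2 * x)) / (g1 + g2).

Lemma hom_sol_slope_0 v : hom_sol_slope v 0 = - beta.
Proof. unfold hom_sol_slope; rewrite !Rmult_0_r, exp_0; field; lra. Qed.

Lemma is_derive_hom_sol_shift v s x :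
  is_derive (fun x => hom_sol v (x - s)) x (hom_sol_slope v (x - s)).
Proof. unfold hom_sol, hom_sol_slope; auto_derive; [exact I | derive_field; lra]. Qed.

Lemma hom_sol_monotone_on_neg v :
  0 < beta -> 0 < g1 * v + beta -> (g1 - g2) * beta < g1 * g2 * v ->
  forall x y, x < y -> y < 0 ->
  hom_sol v y < hom_sol v x /\ hom_sol_slope v x < hom_sol_slope v y.
Proof.
  intros beta_pos c2_pos c1_bound x y hxy hy.
  assert (weights : forall z, z < 0 -> 1 <= exp (- g2 * z) /\ 0 <= exp (g1 * z) <= 1).
  { intros z hz; split; [apply exp_ge_1; nra|].
    split; [left; apply exp_pos | apply exp_le_1; nra]. }
  split.
  - cut (- hom_sol v x < - hom_sol v y); [lra|].
    apply (incr_function (fun z => - hom_sol v z) m_infty 0 (fun z => - hom_sol_slope v z));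
      [| | exact I | lra | exact hy].
    + intros z _ _. apply (is_derive_opp (hom_sol v)).
      unfold hom_sol, hom_sol_slope; auto_derive; [exact I | derive_field; lra].
    + intros z _ hz; simpl in hz; destruct (weights z hz) as [E1 E2].
      unfold hom_sol_slope.
      replace (- (_ / _)) with ((g2 * (g1 * v + beta) * exp (- g2 * z)
          + (- g1 * (g2 * v - beta)) * exp (g1 * z)) / (g1 + g2)) by (field; lra).
      apply Rdiv_lt_0_compat; [|lra].
      apply weighted_sum_pos; auto.
      * apply Rmult_lt_0_compat; lra.
      * replace (_ + _) with ((g1 + g2) * beta) by ring.
        apply Rmult_lt_0_compat; lra.
  - apply (incr_function (hom_sol_slope v) m_infty 0 (fun z =>
      (g2 ^ 2 * (g1 * v + beta) * exp (- g2 * z) + g1 ^ 2 * (g2 * v - beta) * exp (g1 * z))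
      / (g1 + g2))); [| | exact I | exact hxy | exact hy].
    + intros z _ _.
      unfold hom_sol_slope; auto_derive; [exact I | derive_field; lra].
    + intros z _ hz; simpl in hz; destruct (weights z hz) as [E1 E2].
      apply Rdiv_lt_0_compat; [|lra].
      apply weighted_sum_pos; auto.
      * apply Rmult_lt_0_compat; [apply pow_lt|]; lra.
      * replace (_ + _) with ((g1 + g2) * (g1 * g2 * v - (g1 - g2) * beta)) by ring.
        apply Rmult_lt_0_compat; lra.
Qed.

Lemma hom_sol_along_curve_increasing (phi : R -> R) a d :
  (forall s, a < s < d ->
     ex_derive phi s /\ - beta < Derive phi s /\ g1 * g2 * phi s < (g1 - g2) * beta) ->
  forall x y, a < x -> x < y -> y < d ->
  hom_sol (phi x) (d - x) < hom_sol (phi y) (d - y) /\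
  hom_sol_slope (phi x) (d - x) < hom_sol_slope (phi y) (d - y).
Proof.
  intros Hphi x y hx hxy hy.
  set (A s := g2 * (Derive phi s + beta) + ((g1 - g2) * beta - g1 * g2 * phi s)).
  set (B s := g1 * (Derive phi s + beta) - ((g1 - g2) * beta - g1 * g2 * phi s)).
  assert (weights : forall s, s < d ->
            1 <= exp (g1 * (d - s)) /\ 0 <= exp (- g2 * (d - s)) <= 1).
  { intros s hs; split; [apply exp_ge_1; nra|].
    split; [left; apply exp_pos | apply exp_le_1; nra]. }
  split.
  - apply (incr_function (fun s => hom_sol (phi s) (d - s)) a d
      (fun s => (A s * exp (g1 * (d - s)) + B s * exp (- g2 * (d - s))) / (g1 + g2)));
      [| | exact hx | exact hxy | exact hy].
    + intros s hs1 hs2. destruct (Hphi s (conj hs1 hs2)) as [Hder _].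
      unfold hom_sol. auto_derive; change (fun z => phi z) with phi; [tauto|].
      unfold A, B; derive_field; lra.
    + intros s hs1 hs2; simpl in hs1, hs2.
      destruct (Hphi s (conj hs1 hs2)) as [_ [v0_pos v1_pos]].
      destruct (weights s hs2) as [E1 E2].
      apply Rdiv_lt_0_compat; [|lra].
      apply weighted_sum_pos; auto; unfold A, B.
      * apply Rplus_lt_0_compat; [apply Rmult_lt_0_compat|]; lra.
      * replace (_ + _) with ((g1 + g2) * (Derive phi s + beta)) by ring.
        apply Rmult_lt_0_compat; lra.
  - apply (incr_function (fun s => hom_sol_slope (phi s) (d - s)) a d
      (fun s => (g1 * A s * exp (g1 * (d - s)) + (- g2 * B s) * exp (- g2 * (d - s)))
                / (g1 + g2))); [| | exact hx | exact hxy | exact hy].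
    + intros s hs1 hs2. destruct (Hphi s (conj hs1 hs2)) as [Hder _].
      unfold hom_sol_slope. auto_derive; change (fun z => phi z) with phi; [tauto|].
      unfold A, B; derive_field; lra.
    + intros s hs1 hs2; simpl in hs1, hs2.
      destruct (Hphi s (conj hs1 hs2)) as [_ [v0_pos v1_pos]].
      destruct (weights s hs2) as [E1 E2].
      apply Rdiv_lt_0_compat; [|lra].
      apply weighted_sum_pos; auto; unfold A, B.
      * apply Rmult_lt_0_compat; [|apply Rplus_lt_0_compat; [apply Rmult_lt_0_compat|]]; lra.
      * replace (_ + _) with ((g1 + g2) * ((g1 - g2) * beta - g1 * g2 * phi s)) by ring.
        apply Rmult_lt_0_compat; lra.
Qed.

End HomogeneousSolution.

Section Model.
Variables mu sigma u0 r d beta : R.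
Hypotheses (sigma_pos : 0 < sigma) (u0_pos : 0 < u0) (r_pos : 0 < r) (beta_pos : 0 < beta).

Local Notation a1 := (alpha1 mu sigma u0 r).
Local Notation a2 := (alpha2 mu sigma u0 r).
Local Notation g1 := (gamma1 mu sigma r).
Local Notation g2 := (gamma2 mu sigma r).
Local Notation Fdiag s := (Ffun mu sigma u0 r beta s s).
Local Notation G C s := (Gfun mu sigma r d beta C s).
Local Notation H C t := (Hfun mu sigma r d beta C t).

Let a1_pos : 0 < a1 := theta1_pos mu sigma r u0 sigma_pos r_pos.
Let a2_pos : 0 < a2 := theta2_pos mu sigma r u0 sigma_pos r_pos.
Let g1_pos : 0 < g1 := theta1_pos mu sigma r 0 sigma_pos r_pos.
Let g2_pos : 0 < g2 := theta2_pos mu sigma r 0 sigma_pos r_pos.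
Let a1_mul_a2 : a1 * a2 = 2 * r / sigma^2 := theta1_mul_theta2 mu sigma r u0 sigma_pos r_pos.
Let a1_sub_a2 : a1 - a2 = 2 * (mu - u0) / sigma^2 := theta1_sub_theta2 mu sigma r u0 sigma_pos.
Let g1_mul_g2 : g1 * g2 = 2 * r / sigma^2 := theta1_mul_theta2 mu sigma r 0 sigma_pos r_pos.
Let g1_sub_g2 : g1 - g2 = 2 * (mu - 0) / sigma^2 := theta1_sub_theta2 mu sigma r 0 sigma_pos.

Lemma Gfun_hom_sol C s z : G C s z = hom_sol g1 g2 beta (G C s s) (z - s).
Proof.
  unfold Gfun, hom_sol; rewrite !exp_neg_mul, !exp_mul_sub, !exp_add_mul.
  field; repeat split; apply Rgt_not_eq; positivity.
Qed.

Lemma Gfun_at_d C s : G C s d = C.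
Proof.
  unfold Gfun; rewrite !exp_neg_mul, !exp_mul_sub, !exp_add_mul.
  field; repeat split; apply Rgt_not_eq; positivity.
Qed.

Lemma Hfun_hom_sol C t z : H C t z = - (1 / r) + hom_sol g1 g2 beta (H C t t + 1 / r) (z - t).
Proof.
  unfold Hfun, hom_sol; rewrite !exp_neg_mul, !exp_mul_sub, !exp_add_mul.
  field; repeat split; apply Rgt_not_eq; positivity.
Qed.

Lemma Hfun_at_d C t : H C t d = C.
Proof.
  unfold Hfun; rewrite !exp_neg_mul, !exp_mul_sub, !exp_add_mul.
  field; repeat split; apply Rgt_not_eq; positivity.
Qed.

Lemma Derive_Gfun C s z : Derive (G C s) z = hom_sol_slope g1 g2 beta (G C s s) (z - s).
Proof.
  rewrite (Derive_ext _ _ _ (Gfun_hom_sol C s)).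
  apply is_derive_unique, is_derive_hom_sol_shift; assumption.
Qed.

Lemma Derive_Hfun C t z : Derive (H C t) z = hom_sol_slope g1 g2 beta (H C t t + 1 / r) (z - t).
Proof.
  rewrite (Derive_ext _ _ _ (Hfun_hom_sol C t)).
  apply is_derive_unique; unfold hom_sol, hom_sol_slope.
  auto_derive; [exact I | derive_field; lra].
Qed.

Lemma gamma_cross_eq v : (g1 - g2) * beta - g1 * g2 * v = 2 / sigma^2 * (mu * beta - r * v).
Proof.
  rewrite g1_mul_g2, g1_sub_g2; field; lra.
Qed.

Lemma Fdiag_slope_gt s :
  0 < s -> ex_derive (fun s => Fdiag s) s /\ - beta < Derive (fun s => Fdiag s) s.
Proof.
  intros s_pos.
  set (X := exp (a1 * s)); set (Y := exp (- a2 * s)).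
  assert (X_gt : 1 < X) by (unfold X; rewrite <- exp_0; apply exp_increasing; nra).
  assert (Y_lt : Y < 1) by (unfold Y; rewrite <- exp_0; apply exp_increasing; nra).
  assert (Y_pos : 0 < Y) by apply exp_pos.
  assert (Hder : is_derive (fun s => Fdiag s) s
    (- beta + beta * (X + a1 / a2 * Y) * (a1 * X + a2 * Y) / (a1 * (X - Y)^2))).
  { unfold Ffun; auto_derive.
    - fold X Y; intros E; apply Rmult_integral in E; lra.
    - fold X Y; derive_field; lra. }
  split; [eexists; exact Hder|].
  erewrite is_derive_unique; [|exact Hder].
  cut (0 < beta * (X + a1 / a2 * Y) * (a1 * X + a2 * Y) / (a1 * (X - Y)^2)); [lra|].
  apply Rdiv_lt_0_compat; [|apply Rmult_lt_0_compat; [|apply pow_lt]; lra].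
  positivity; try lra; apply Rdiv_lt_0_compat; lra.
Qed.

Lemma r_Fdiag_lt_mu_beta s : 0 < s -> r * Fdiag s < mu * beta.
Proof.
  intros s_pos; unfold Ffun.
  set (X := exp (a1 * s)); set (Y := exp (- a2 * s)).
  assert (X_gt : 1 < X) by (unfold X; rewrite <- exp_0; apply exp_increasing; nra).
  assert (Y_lt : Y < 1) by (unfold Y; rewrite <- exp_0; apply exp_increasing; nra).
  assert (Y_pos : 0 < Y) by apply exp_pos.
  clearbody X Y.
  (* [alpha1], [alpha2] mention [r] and [u0]: abstract them before eliminating [r] and [u0]. *)
  generalize a1_mul_a2 a1_sub_a2 a1_pos a2_pos.
  generalize (alpha1 mu sigma u0 r) (alpha2 mu sigma u0 r); intros b1 b2 prod diff b1_pos b2_pos.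
  assert (Hr : r = b1 * b2 * sigma^2 / 2) by (rewrite prod; field; lra).
  assert (Hu : u0 = mu - sigma^2 * (b1 - b2) / 2) by (rewrite diff; field; lra).
  assert (key : mu * beta - r * (beta * u0 / r - beta * (X + b1 / b2 * Y) / (b1 * (X - Y)))
                = beta * sigma^2 / 2 * (b1 * X + b2 * Y) / (X - Y)).
  { rewrite Hu, Hr; field; repeat split; lra. }
  cut (0 < beta * sigma^2 / 2 * (b1 * X + b2 * Y) / (X - Y)); [lra|].
  assert (0 < sigma^2) by (apply pow_lt; lra).
  apply Rdiv_lt_0_compat; [|lra].
  unfold Rdiv; positivity; lra.
Qed.

Lemma mu_beta_lt_r_Kdiag : mu * beta < r * (beta * u0 / r + beta / a2).
Proof.
  generalize a1_mul_a2 a1_sub_a2 a1_pos a2_pos.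
  generalize (alpha1 mu sigma u0 r) (alpha2 mu sigma u0 r); intros b1 b2 prod diff b1_pos b2_pos.
  assert (Hr : r = b1 * b2 * sigma^2 / 2) by (rewrite prod; field; lra).
  assert (Hu : u0 = mu - sigma^2 * (b1 - b2) / 2) by (rewrite diff; field; lra).
  assert (key : r * (beta * u0 / r + beta / b2) - mu * beta = beta * sigma^2 * b2 / 2).
  { rewrite Hu, Hr; field; repeat split; lra. }
  assert (0 < sigma^2) by (apply pow_lt; lra).
  cut (0 < beta * sigma^2 * b2 / 2); [lra|].
  unfold Rdiv; positivity; lra.
Qed.

Lemma Derive_Gfun_at_free_boundary C s : Derive (G C s) s = - beta.
Proof. rewrite Derive_Gfun, Rminus_diag; apply hom_sol_slope_0; assumption. Qed.

Lemma Derive_Hfun_at_free_boundary C t : Derive (H C t) t = - beta.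
Proof. rewrite Derive_Hfun, Rminus_diag; apply hom_sol_slope_0; assumption. Qed.

Lemma zf_prop_hom_sol C s : zf_prop mu sigma u0 r d beta C s ->
  0 < s < d /\ C = hom_sol g1 g2 beta (Fdiag s) (d - s) /\
  Derive (G C s) d = hom_sol_slope g1 g2 beta (Fdiag s) (d - s).
Proof.
  intros [s_range [[_ Hsol] _]].
  destruct (Hsol s) as [Hder _]; [lra|].
  assert (matching : Fdiag s = G C s s).
  { apply (glue_eq_of_continuous (Ffun mu sigma u0 r beta s) (G C s) s).
    - apply (ex_derive_continuous (V := R_NormedModule)), Hder.
    - apply (ex_derive_continuous (V := R_NormedModule)); unfold Gfun; auto_derive; exact I. }
  rewrite matching, Derive_Gfun, <- Gfun_hom_sol, Gfun_at_d; tauto.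
Qed.

Lemma zg_prop_hom_sol C t : zg_prop mu sigma u0 r d beta C t ->
  d < t /\ C = hom_sol g1 g2 beta (beta * u0 / r + beta / a2) (d - t) - 1 / r /\
  Derive (H C t) d = hom_sol_slope g1 g2 beta (beta * u0 / r + beta / a2) (d - t).
Proof.
  intros [t_range [[_ Hsol] _]].
  destruct (Hsol t) as [Hder _]; [lra|].
  assert (matching : H C t t = Kfun mu sigma u0 r beta t t).
  { apply (glue_eq_of_continuous (H C t) (Kfun mu sigma u0 r beta t) t).
    - apply (ex_derive_continuous (V := R_NormedModule)), Hder.
    - apply (ex_derive_continuous (V := R_NormedModule)); unfold Kfun; auto_derive; exact I. }
  assert (boundary : H C t t + 1 / r = beta * u0 / r + beta / a2).
  { rewrite matching; unfold Kfun; rewrite Rminus_diag, Rmult_0_r, exp_0; field; lra. }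
  rewrite Derive_Hfun, <- boundary; split; [exact t_range|]; split; [|reflexivity].
  rewrite <- (Hfun_at_d C t) at 1; rewrite Hfun_hom_sol; ring.
Qed.

Lemma Derive_Gfun_zf_increasing C1 C2 s1 s2 :
  zf_prop mu sigma u0 r d beta C1 s1 -> zf_prop mu sigma u0 r d beta C2 s2 -> C1 < C2 ->
  Derive (G C1 s1) d < Derive (G C2 s2) d.
Proof.
  intros [s1_range [C1_eq D1_eq]]%zf_prop_hom_sol [s2_range [C2_eq D2_eq]]%zf_prop_hom_sol hC.
  rewrite D1_eq, D2_eq; rewrite C1_eq, C2_eq in hC.
  apply (strict_mono_transfer (fun s => 0 < s < d)
           (fun s => hom_sol g1 g2 beta (Fdiag s) (d - s))
           (fun s => hom_sol_slope g1 g2 beta (Fdiag s) (d - s))); auto.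
  intros x y hx hy hxy.
  apply (hom_sol_along_curve_increasing _ _ _ g1_pos g2_pos (fun s => Fdiag s) 0 d); try lra.
  intros s hs; pose proof (gamma_cross_eq (Fdiag s)).
  destruct (Fdiag_slope_gt s) as [Hex Hslope]; [lra|].
  pose proof (r_Fdiag_lt_mu_beta s (proj1 hs)).
  assert (0 < 2 / sigma^2) by (apply Rdiv_lt_0_compat; [lra | apply pow_lt; lra]).
  repeat split; auto; nra.
Qed.

Lemma Derive_Hfun_zg_decreasing C1 C2 t1 t2 :
  zg_prop mu sigma u0 r d beta C1 t1 -> zg_prop mu sigma u0 r d beta C2 t2 -> C1 < C2 ->
  Derive (H C2 t2) d < Derive (H C1 t1) d.
Proof.
  intros [t1_range [C1_eq D1_eq]]%zg_prop_hom_sol [t2_range [C2_eq D2_eq]]%zg_prop_hom_sol hC.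
  rewrite D1_eq, D2_eq; rewrite C1_eq, C2_eq in hC.
  set (W := beta * u0 / r + beta / a2) in *.
  cut (- hom_sol_slope g1 g2 beta W (d - t1) < - hom_sol_slope g1 g2 beta W (d - t2)); [lra|].
  apply (strict_mono_transfer (fun t => d < t)
           (fun t => hom_sol g1 g2 beta W (d - t) - 1 / r)
           (fun t => - hom_sol_slope g1 g2 beta W (d - t))); auto.
  intros x y hx hy hxy.
  assert (W_pos : 0 < W) by (unfold W, Rdiv; positivity).
  assert (W_bound : (g1 - g2) * beta < g1 * g2 * W).
  { pose proof (gamma_cross_eq W); pose proof mu_beta_lt_r_Kdiag as K_gt; fold W in K_gt.
    assert (0 < 2 / sigma^2) by (apply Rdiv_lt_0_compat; [lra | apply pow_lt; lra]).
    nra. }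
  destruct (hom_sol_monotone_on_neg g1 g2 beta g1_pos g2_pos W beta_pos) with (d - y) (d - x)
    as [value_decr slope_incr]; [positivity | assumption | lra | lra | split; lra].
Qed.

End Model.

Theorem lemma4p7 (mu sigma u0 r d beta : R) (zf zg : R -> R) :
  0 < sigma -> 0 < u0 -> 0 < r -> 0 < d -> 0 < beta ->
  beta < zeta mu sigma u0 r d ->
  (forall C, xi2 mu sigma u0 r beta < C < xi1 mu sigma u0 r d beta ->
     zf_prop mu sigma u0 r d beta C (zf C) /\
     (forall z, zf_prop mu sigma u0 r d beta C z -> z = zf C)) ->
  (forall C, xi2 mu sigma u0 r beta < C < xi1 mu sigma u0 r d beta ->
     zg_prop mu sigma u0 r d beta C (zg C) /\
     (forall z, zg_prop mu sigma u0 r d beta C z -> z = zg C)) ->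
  ((forall C1 C2,
      xi2 mu sigma u0 r beta < C1 -> C1 < C2 -> C2 < xi1 mu sigma u0 r d beta ->
      Derive (Gfun mu sigma r d beta C1 (zf C1)) d
        < Derive (Gfun mu sigma r d beta C2 (zf C2)) d) /\
   Derive (Gfun mu sigma r d beta (xi1 mu sigma u0 r d beta) d) d = - beta) /\
  ((forall C1 C2,
      xi2 mu sigma u0 r beta < C1 -> C1 < C2 -> C2 < xi1 mu sigma u0 r d beta ->
      Derive (Hfun mu sigma r d beta C2 (zg C2)) d
        < Derive (Hfun mu sigma r d beta C1 (zg C1)) d) /\
   Derive (Hfun mu sigma r d beta (xi2 mu sigma u0 r beta) d) d = - beta).
Proof.
  (* [beta < zeta] only makes the range of [C] nonempty; uniqueness of [zf], [zg] is unused. *)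
  intros sigma_pos u0_pos r_pos _ beta_pos _ Hzf Hzg.
  split; split.
  - intros C1 C2 h1 h12 h2.
    apply (Derive_Gfun_zf_increasing mu sigma u0 r d beta); auto; [apply Hzf | apply Hzf]; lra.
  - apply (Derive_Gfun_at_free_boundary mu sigma r); assumption.
  - intros C1 C2 h1 h12 h2.
    apply (Derive_Hfun_zg_decreasing mu sigma u0 r d beta); auto; [apply Hzg | apply Hzg]; lra.
  - apply (Derive_Hfun_at_free_boundary mu sigma r); assumption.
Qed.
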